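(* Let $(X,\rho_X)$ be a symmetric rack, $(A,\phi,\psi,\eta)$ a constant-coefficient $(X,\rho_X)$-module, and $\alpha\in Z^2_{SR}((X,\rho_X);A)$. Then $\operatorname{Ker}(\Gamma)$ is isomorphic as a group to $$Z^1_{SR}((X,\rho_X);A)=\{\lambda:X\to A\mid \phi\lambda(x)-\lambda(x*y)+\psi\lambda(y)=0\text{ and }\eta\lambda(z)=\lambda(\rho_X(z))\text{ for all }x,y,z\in X\},$$ a group under pointwise addition.
   Context: A rack is a set $X$ with binary operation $*$ such that each $x\mapsto x*y$ is bijective (inverse $x\mapsto x*^{-1}y$) and $(x*y)*z=(x*z)*(y*z)$. A symmetric rack $(X,\rho_X)$ is a rack with $\rho_X:X\to X$ such that $\rho_X^2=\mathrm{id}$, $\rho_X(x*y)=\rho_X(x)*y$, $x*\rho_X(y)=x*^{-1}y$. $\operatorname{Aut}(X,\rho_X)$: bijections preserving $*$ and commuting with $\rho_X$. A constant-coefficient $(X,\rho_X)$-module $\mathcal F=(A,\phi,\psi,\eta)$: an abelian group $A$ with group automorphism $\phi$ and endomorphisms $\psi,\eta$ satisfying $\phi\psi=\psi\phi$, $\eta^2=\mathrm{id}$, $\eta\phi=\phi\eta$, $\eta\psi=\psi$, $\phi^2=\mathrm{id}$, $\psi=\phi\psi+\psi^2$, $\phi\psi\eta=-\psi$. $\operatorname{Aut}(A)$: group automorphisms of $A$ commuting with $\phi,\psi,\eta$. $Z^2_{SR}((X,\rho_X);A)$: maps $\alpha:X\times X\to A$ with, for all $x,y,z$: $-\phi\alpha(x,z)+\phi\alpha(x,y)+\alpha(x*y,z)-\alpha(x*z,y*z)-\psi\alpha(y,z)=0$,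 $\eta\alpha(x,y)=\alpha(\rho_X(x),y)$, $\phi\alpha(x*y,\rho_X(y))+\alpha(x,y)=0$. $E(\mathcal F,\alpha)$ is the symmetric rack on $X\times A$ with $(x,a)*(y,b)=(x*y,\phi(a)+\psi(b)+\alpha(x,y))$ and $\rho_{E(\mathcal F,\alpha)}(x,a)=(\rho_X(x),\eta(a))$. $\operatorname{Aut}_A(E(\mathcal F,\alpha),\rho_{E(\mathcal F,\alpha)})$ is the group of symmetric rack automorphisms $\xi$ of it of the form $\xi(x,s)=(\zeta(x),\lambda(x)+\theta(s))$ with $(\zeta,\theta)\in\operatorname{Aut}(X,\rho_X)\times\operatorname{Aut}(A)$ and $\lambda:X\to A$ a map; $\Gamma:\operatorname{Aut}_A(E(\mathcal F,\alpha),\rho_{E(\mathcal F,\alpha)})\to\operatorname{Aut}(X,\rho_X)\times\operatorname{Aut}(A)$ is the group homomorphism $\Gamma(\xi)=(\zeta,\theta)$. *)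

From mathcomp Require Import all_boot all_algebra.
Import GRing.Theory.
Set Implicit Arguments.
Unset Strict Implicit.
Unset Printing Implicit Defensive.
Local Open Scope ring_scope.

Definition is_rack (X : Type) (op : X -> X -> X) : Prop :=
  (forall y, bijective (fun x => op x y)) /\
  (forall x y z, op (op x y) z = op (op x z) (op y z)).

(* x *^{-1} y is the unique z with z * y = x; hence the axiom
   x * rho y = x *^{-1} y is written as (x * rho y) * y = x. *)
Definition is_symmetric_rack (X : Type) (op : X -> X -> X) (rho : X -> X) : Prop :=
  [/\ is_rack op,
      (forall x, rho (rho x) = x),
      (forall x y, rho (op x y) = op (rho x) y) &
      (forall x y, op (op x (rho y)) y = x)].

Definition is_zhom (A : zmodType) (f : A -> A) : Prop :=
  forall a b, f (a + b) = f a + f b.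

Definition is_cc_module (A : zmodType) (phi psi eta : A -> A) : Prop :=
  (is_zhom phi /\ bijective phi) /\ is_zhom psi /\ is_zhom eta /\
  (forall a, phi (psi a) = psi (phi a)) /\
  (forall a, eta (eta a) = a) /\
  (forall a, eta (phi a) = phi (eta a)) /\
  (forall a, eta (psi a) = psi a) /\
  (forall a, phi (phi a) = a) /\
  (forall a, psi a = phi (psi a) + psi (psi a)) /\
  (forall a, phi (psi (eta a)) = - psi a).

Definition in_Z2 (X : Type) (op : X -> X -> X) (rho : X -> X)
  (A : zmodType) (phi psi eta : A -> A) (alpha : X -> X -> A) : Prop :=
  [/\ (forall x y z, - phi (alpha x z) + phi (alpha x y) + alpha (op x y) z
                     - alpha (op x z) (op y z) - psi (alpha y z) = 0),
      (forall x y, eta (alpha x y) = alpha (rho x) y) &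
      (forall x y, phi (alpha (op x y) (rho y)) + alpha x y = 0)].

Definition in_Z1 (X : Type) (op : X -> X -> X) (rho : X -> X)
  (A : zmodType) (phi psi eta : A -> A) (lambda : X -> A) : Prop :=
  (forall x y, phi (lambda x) - lambda (op x y) + psi (lambda y) = 0) /\
  (forall z, eta (lambda z) = lambda (rho z)).

Definition E_op (X : Type) (op : X -> X -> X) (A : zmodType)
  (phi psi : A -> A) (alpha : X -> X -> A) (p q : X * A) : X * A :=
  (op p.1 q.1, phi p.2 + psi q.2 + alpha p.1 q.1).

Definition E_rho (X : Type) (rho : X -> X) (A : zmodType) (eta : A -> A)
  (p : X * A) : X * A := (rho p.1, eta p.2).

Definition is_symrack_aut (Y : Type) (op : Y -> Y -> Y) (rho : Y -> Y)
  (f : Y -> Y) : Prop :=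
  [/\ bijective f,
      (forall x y, f (op x y) = op (f x) (f y)) &
      (forall x, f (rho x) = rho (f x))].

Definition is_module_aut (A : zmodType) (phi psi eta theta : A -> A) : Prop :=
  [/\ is_zhom theta, bijective theta,
      (forall a, theta (phi a) = phi (theta a)),
      (forall a, theta (psi a) = psi (theta a)) &
      (forall a, theta (eta a) = eta (theta a))].

Definition Gamma_rel (X : Type) (A : zmodType) (xi : X * A -> X * A)
  (zeta : X -> X) (theta : A -> A) : Prop :=
  exists lambda : X -> A, forall x s, xi (x, s) = (zeta x, lambda x + theta s).

Definition in_Aut_A (X : Type) (op : X -> X -> X) (rho : X -> X)
  (A : zmodType) (phi psi eta : A -> A) (alpha : X -> X -> A)
  (xi : X * A -> X * A) : Prop :=
  is_symrack_aut (E_op op phi psi alpha) (E_rho rho eta) xi /\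
  exists (zeta : X -> X) (theta : A -> A),
    [/\ is_symrack_aut op rho zeta, is_module_aut phi psi eta theta &
        Gamma_rel xi zeta theta].

(** Membership in Ker(Gamma): Gamma(xi) = (id, id). *)
Definition in_Ker_Gamma (X : Type) (op : X -> X -> X) (rho : X -> X)
  (A : zmodType) (phi psi eta : A -> A) (alpha : X -> X -> A)
  (xi : X * A -> X * A) : Prop :=
  in_Aut_A op rho phi psi eta alpha xi /\ Gamma_rel xi id id.

From mathcomp Require Import all_boot all_algebra.
From Stdlib Require Import FunctionalExtensionality.
Import GRing.Theory.
Set Implicit Arguments.
Unset Strict Implicit.
Unset Printing Implicit Defensive.
Local Open Scope ring_scope.

(* An element of Ker(Gamma) is a shift (x, s) |-> (x, lambda x + s).  Such a
   shift respects the operation of E(F, alpha) exactly when lambda is a rack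
   1-cocycle, because alpha appears identically on both sides and cancels, and
   it commutes with rho_E exactly when lambda is eta-equivariant.  Composing two
   shifts adds their lambdas, so lambda |-> shift lambda is the isomorphism. *)

Lemma zhom0 (A : zmodType) (f : A -> A) : is_zhom f -> f 0 = 0.
Proof. by move=> fD; apply: (@addrI _ (f 0)); rewrite -fD !addr0. Qed.

Section Shifts.

Variables (X : Type) (A : zmodType).

Definition shift (lambda : X -> A) (p : X * A) : X * A := (p.1, lambda p.1 + p.2).

Definition shift_part (xi : X * A -> X * A) (x : X) : A := (xi (x, 0)).2.

Lemma shift_partK (lambda : X -> A) : shift_part (shift lambda) = lambda.
Proof. by apply: functional_extensionality => x; rewrite /shift_part /= addr0. Qed.

Lemma shift_comp (lambda mu : X -> A) :
  shift lambda \o shift mu = shift (fun x => lambda x + mu x).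
Proof. by apply: functional_extensionality => -[x s]; rewrite /shift /= addrA. Qed.

Lemma shift_bij (lambda : X -> A) : bijective (shift lambda).
Proof.
exists (shift (fun x => - lambda x)) => -[x s]; rewrite /shift /=.
- by rewrite addKr.
- by rewrite addNKr.
Qed.

Lemma Gamma_rel_idE (xi : X * A -> X * A) :
  Gamma_rel xi id id -> xi = shift (shift_part xi).
Proof.
case=> lambda xiE; apply: functional_extensionality => -[x s].
by rewrite /shift /shift_part /= !xiE /= addr0.
Qed.

End Shifts.

Section KernelOfGamma.

Variables (X : Type) (op : X -> X -> X) (rho : X -> X).
Variables (A : zmodType) (phi psi eta : A -> A) (alpha : X -> X -> A).
Hypotheses (phiD : is_zhom phi) (psiD : is_zhom psi) (etaD : is_zhom eta).

Lemma in_Z1E (lambda : X -> A) :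
  in_Z1 op rho phi psi eta lambda <->
  (forall x y, lambda (op x y) = phi (lambda x) + psi (lambda y)) /\
  (forall z, eta (lambda z) = lambda (rho z)).
Proof.
have cocycleE x y : (phi (lambda x) - lambda (op x y) + psi (lambda y) = 0) <->
                    (lambda (op x y) = phi (lambda x) + psi (lambda y)).
  split=> [/eqP | ->]; last by rewrite addrAC subrr.
  by rewrite addrAC subr_eq0 eq_sym => /eqP.
by split=> -[l_op l_rho]; split=> // x y; apply/cocycleE.
Qed.

Lemma shift_E_opE (lambda : X -> A) :
  (forall p q, shift lambda (E_op op phi psi alpha p q)
               = E_op op phi psi alpha (shift lambda p) (shift lambda q)) <->
  (forall x y, lambda (op x y) = phi (lambda x) + psi (lambda y)).
Proof.
split=> [l_hom x y | l_op [x a] [y b]].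
- have [] := l_hom (x, 0) (y, 0).
  rewrite /= (zhom0 phiD) (zhom0 psiD) !add0r !addr0.
  by move/addIr.
- rewrite /shift /E_op /= l_op phiD psiD !addrA.
  by congr (_, _ + _ + _); rewrite addrAC.
Qed.

Lemma shift_E_rhoE (lambda : X -> A) :
  (forall p, shift lambda (E_rho rho eta p) = E_rho rho eta (shift lambda p)) <->
  (forall z, eta (lambda z) = lambda (rho z)).
Proof.
split=> [l_rho z | l_rho [z a]]; rewrite /shift /E_rho /=.
- by have [] := l_rho (z, 0); rewrite /= (zhom0 etaD) !addr0.
- by rewrite etaD l_rho.
Qed.

Lemma shift_symrack_autE (lambda : X -> A) :
  is_symrack_aut (E_op op phi psi alpha) (E_rho rho eta) (shift lambda) <->
  in_Z1 op rho phi psi eta lambda.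
Proof.
split=> [[_ /shift_E_opE l_op /shift_E_rhoE l_rho] | /in_Z1E[]].
- exact/in_Z1E.
- by move=> /shift_E_opE l_op /shift_E_rhoE l_rho; split=> //; apply: shift_bij.
Qed.

Lemma id_symrack_aut : is_symrack_aut op rho id.
Proof. by split=> //; exists id. Qed.

Lemma id_module_aut : is_module_aut phi psi eta id.
Proof. by split=> //; exists id. Qed.

Lemma in_Ker_Gamma_shiftE (lambda : X -> A) :
  in_Ker_Gamma op rho phi psi eta alpha (shift lambda) <->
  in_Z1 op rho phi psi eta lambda.
Proof.
split=> [[[l_aut _] _] | l_Z1]; first exact/shift_symrack_autE.
have Gamma_id : Gamma_rel (shift lambda) id id by exists lambda.
split=> //; split; first exact/shift_symrack_autE.
by exists id, id; split; [exact: id_symrack_aut | exact: id_module_aut |].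
Qed.

Lemma in_Ker_GammaE (xi : X * A -> X * A) :
  in_Ker_Gamma op rho phi psi eta alpha xi -> xi = shift (shift_part xi).
Proof. by case=> _; apply: Gamma_rel_idE. Qed.

End KernelOfGamma.

Theorem proposition6p6 (X : Type) (op : X -> X -> X) (rho : X -> X)
  (A : zmodType) (phi psi eta : A -> A) (alpha : X -> X -> A) :
  is_symmetric_rack op rho ->
  is_cc_module phi psi eta ->
  in_Z2 op rho phi psi eta alpha ->
  exists f : (X * A -> X * A) -> (X -> A),
    [/\ (forall xi, in_Ker_Gamma op rho phi psi eta alpha xi ->
                    in_Z1 op rho phi psi eta (f xi)),
        (forall xi xi', in_Ker_Gamma op rho phi psi eta alpha xi ->
                        in_Ker_Gamma op rho phi psi eta alpha xi' ->
                        f xi = f xi' -> xi = xi'),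
        (forall lambda, in_Z1 op rho phi psi eta lambda ->
           exists xi, in_Ker_Gamma op rho phi psi eta alpha xi /\ f xi = lambda) &
        (forall xi xi', in_Ker_Gamma op rho phi psi eta alpha xi ->
                        in_Ker_Gamma op rho phi psi eta alpha xi' ->
                        f (xi \o xi') = (fun x => f xi x + f xi' x))].
Proof.
move=> _ [[phiD _] [psiD [etaD _]]] _.
have kerE := @in_Ker_GammaE _ op rho _ phi psi eta alpha.
have ker_shiftE := @in_Ker_Gamma_shiftE _ op rho _ phi psi eta alpha phiD psiD etaD.
exists (@shift_part X A); split.
- by move=> xi ker_xi; apply/ker_shiftE; rewrite -kerE.
- by move=> xi xi' /kerE xiE /kerE xi'E part_eq; rewrite xiE xi'E part_eq.
- by move=> lambda /ker_shiftE ker_l; exists (shift lambda); rewrite shift_partK.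
- by move=> xi xi' /kerE xiE /kerE xi'E; rewrite xiE xi'E shift_comp !shift_partK.
Qed.
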